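(* Let $A$ be $\phi_A$-uniformly monotone and $B$ be $\phi_B$-uniformly monotone, let $x\in\operatorname{zer}(A+B)$, and let $(x_n)$, $(y_n)$, $(r_n)$ be generated by the reflected stochastic forward–backward iteration with step sizes $(\gamma_n)$. For every $n\ge 1$ set $$\epsilon_n=2\gamma_n\big(\phi_A(\|x_{n+1}-x\|)+\phi_A(\|x_{n+1}-x_n\|)+\phi_B(\|y_n-x\|)\big).$$ Then, for every $n\ge1$ (pointwise on $\Omega$), $$\|x_{n+1}-x\|^2+\epsilon_n+\Big(3-\frac{\gamma_n}{\gamma_{n-1}}\Big)\|x_{n+1}-x_n\|^2+\frac{\gamma_n}{\gamma_{n-1}}\|x_{n+1}-y_n\|^2+2\gamma_n\langle r_n-Bx,x_{n+1}-x_n\rangle$$ $$\le\|x_n-x\|^2+2\gamma_n\langle r_{n-1}-Bx,x_n-x_{n-1}\rangle+2\gamma_n\langle r_{n-1}-r_n,x_{n+1}-y_n\rangle+\frac{\gamma_n}{\gamma_{n-1}}\|x_n-y_n\|^2+2\gamma_n\langle r_n-By_n,x-y_n\rangle.$$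
   Context: $\mathcal H$ is a separable real Hilbert space with inner product $\langle\cdot,\cdot\rangle$ and norm $\|\cdot\|$; $(\Omega,\mathcal F,\mathsf P)$ is a probability space. $A:\mathcal H\to2^{\mathcal H}$ is maximally monotone and $B:\mathcal H\to\mathcal H$ is monotone and $\mu$-Lipschitz continuous. $\operatorname{zer}(A+B)=\{x:0\in Ax+Bx\}$. For $\gamma>0$, $J_{\gamma A}=(\mathrm{Id}+\gamma A)^{-1}$ is the resolvent. An operator $M$ is $\phi$-uniformly monotone, where $\phi:[0,\infty[\to[0,\infty]$ is increasing with $\phi(0)=0$ (the choice $\phi\equiv0$ corresponding to mere monotonicity), if $\langle x-y,u-v\rangle\ge\phi(\|x-y\|)$ for all $(x,u),(y,v)\in\operatorname{gra}M$. Reflected stochastic forward–backward iteration: $(\gamma_n)_{n\ge -1}$ is a sequence in $]0,+\infty[$, $x_0,x_{-1}$ are square-integrable $\mathcal H$-valued random variables, and for every $n\in\mathbb N$: $y_n=2x_n-x_{n-1}$; $r_n$ is an $\mathcal H$-valued random variable with $\mathsf E[r_n\mid\mathcal F_n]=By_n$, where $\mathcal F_n=\sigma(x_0,\dots,x_n)$; and $x_{n+1}=J_{\gamma_nA}(x_n-\gamma_nr_n)$. *)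

From HB Require Import structures.
From mathcomp Require Import all_boot all_order all_algebra.
From mathcomp Require Import all_classical all_reals all_analysis.
Set Implicit Arguments. Unset Strict Implicit. Unset Printing Implicit Defensive.
Import Order.TTheory GRing.Theory Num.Theory.
Import numFieldNormedType.Exports.
Local Open Scope classical_set_scope.
Local Open Scope ring_scope.

(* A real inner product on a (complete) normed space H whose norm is the one
   induced by the inner product.  Together with completeness of H this makes H
   a real Hilbert space. *)
Record inner_product (R : realType) (H : normedModType R) := InnerProduct {
  inner :> H -> H -> R;
  inner_sym : forall x y, inner x y = inner y x;
  inner_addl : forall x y z, inner (x + y) z = inner x z + inner y z;
  inner_scalel : forall (a : R) x y, inner (a *: x) y = a * inner x y;
  inner_pos : forall x, x != 0 -> 0 < inner x x;
  inner_norm : forall x, `|x| = Num.sqrt (inner x x)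
}.

Definition separable_space (T : topologicalType) : Prop :=
  exists D : set T, countable D /\ closure D = setT.

Section Operators.
Variables (R : realType) (H : normedModType R) (ip : inner_product H).

(* set-valued operators H -> 2^H are represented by their graph *)
Definition monotone_op (A : H -> set H) : Prop :=
  forall x y u v, A x u -> A y v -> 0 <= ip (x - y) (u - v).

Definition maximally_monotone (A : H -> set H) : Prop :=
  monotone_op A /\
  forall A' : H -> set H, monotone_op A' ->
    (forall x u, A x u -> A' x u) -> forall x u, A' x u -> A x u.

Definition monotone_fun (B : H -> H) : Prop :=
  forall x y, 0 <= ip (x - y) (B x - B y).

Definition lipschitz_with (mu : R) (B : H -> H) : Prop :=
  forall x y, `|B x - B y| <= mu * `|x - y|.

Definition modulus (phi : R -> \bar R) : Prop :=
  phi 0 = 0%E /\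
  (forall t, 0 <= t -> (0 <= phi t)%E) /\
  (forall s t, 0 <= s -> s <= t -> (phi s <= phi t)%E).

Definition unif_monotone_op (phi : R -> \bar R) (A : H -> set H) : Prop :=
  forall x y u v, A x u -> A y v -> (phi (`|x - y|)%R <= (ip (x - y) (u - v))%:E)%E.

Definition unif_monotone_fun (phi : R -> \bar R) (B : H -> H) : Prop :=
  forall x y, (phi (`|x - y|)%R <= (ip (x - y) (B x - B y))%:E)%E.

Definition zer_sum (A : H -> set H) (B : H -> H) (x : H) : Prop :=
  exists u, A x u /\ u + B x = 0.

(* graph of the resolvent J_{gA} = (Id + g A)^{-1}: p \in J_{gA} z iff z \in p + g A p *)
Definition resolvent (A : H -> set H) (g : R) (z p : H) : Prop :=
  exists u, A p u /\ z = p + g *: u.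

End Operators.

Section Random.
Variables (R : realType) (H : normedModType R) (ip : inner_product H).
Variables (d : measure_display) (Omega : measurableType d).

Definition measurable_wrt (G : set (set Omega)) (X : Omega -> H) : Prop :=
  forall U : set H, open U -> G (X @^-1` U).

Definition H_random_variable (X : Omega -> H) : Prop :=
  measurable_wrt measurable X.

Definition square_integrable (P : probability Omega R) (X : Omega -> H) : Prop :=
  H_random_variable X /\ (\int[P]_w ((`|X w| ^+ 2)%:E) < +oo)%E.

Definition H_integrable (P : probability Omega R) (X : Omega -> H) : Prop :=
  H_random_variable X /\ (\int[P]_w ((`|X w|)%:E) < +oo)%E.

Definition natural_filtration (x : int -> Omega -> H) (n : nat) : set (set Omega) :=
  <<s [set E | exists k : nat, (k <= n)%N /\
               exists U : set H, open U /\ E = (x k) @^-1` U] >>.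

(* Z = E[X | G] for H-valued integrable X (H separable, so Bochner
   integrability/conditional expectation is characterized weakly):
   Z is G-measurable, integrable, and for every E in G and every h in H,
   \int_E <X,h> dP = \int_E <Z,h> dP. *)
Definition is_cond_exp (P : probability Omega R) (G : set (set Omega))
    (X Z : Omega -> H) : Prop :=
  H_integrable P X /\ H_integrable P Z /\ measurable_wrt G Z /\
  forall E, G E -> forall h : H,
    (\int[P]_(w in E) (ip (X w) h)%:E = \int[P]_(w in E) (ip (Z w) h)%:E)%E.

End Random.

From HB Require Import structures.
From mathcomp Require Import all_boot all_order all_algebra.
From mathcomp Require Import all_classical all_reals all_analysis.
From mathcomp Require Import ring.
Set Implicit Arguments. Unset Strict Implicit. Unset Printing Implicit Defensive.
Import Order.TTheory GRing.Theory Num.Theory.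
Import numFieldNormedType.Exports.
Local Open Scope classical_set_scope.
Local Open Scope ring_scope.

(* Write p = x_(n+1), q = x_n, s = x_(n-1), so that y_n = 2q - s, and let
   g = gamma_n, g' = gamma_(n-1).  The resolvent steps say that
   u1 = (q - g r_n - p)/g lies in A p and u0 = (s - g' r_(n-1) - q)/g' lies
   in A q, and xstar in zer(A+B) gives -B xstar in A xstar.  Uniform
   monotonicity of A on the pairs (p, xstar), (p, q) and of B on (y_n, xstar)
   bounds eps_n by
     2g (<p - xstar, u1 + B xstar> + <p - q, u1 - u0>
         + <y_n - xstar, B y_n - B xstar>).
   After this bound the claimed inequality becomes an EQUALITY of real
   numbers, the energy identity below, which holds in every real
   inner-product space. *)

Section InnerProduct.
Variables (R : realType) (H : normedModType R) (ip : inner_product H).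

Lemma ipDr x y z : ip x (y + z) = ip x y + ip x z.
Proof. by rewrite inner_sym inner_addl !(inner_sym ip _ x). Qed.

Lemma ipZr (a : R) x y : ip x (a *: y) = a * ip x y.
Proof. by rewrite inner_sym inner_scalel inner_sym. Qed.

Lemma ipNl x y : ip (- x) y = - ip x y.
Proof. by rewrite -scaleN1r inner_scalel mulN1r. Qed.

Lemma ipNr x y : ip x (- y) = - ip x y.
Proof. by rewrite inner_sym ipNl inner_sym. Qed.

Lemma ip_ge0 x : 0 <= ip x x.
Proof.
have [->|nz] := eqVneq x 0; last exact/ltW/inner_pos.
by rewrite -(scale0r (0 : H)) inner_scalel mul0r.
Qed.

Lemma sqr_norm_ip x : `|x| ^+ 2 = ip x x.
Proof. by rewrite (inner_norm ip) sqr_sqrtr // ip_ge0. Qed.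

(* ip_atom is a copy of the inner product that rewriting does not unfold.
   Writing each inner product as the average of both orientations lets the
   field tactic prove identities that rely on the symmetry of ip. *)
Definition ip_atom (x y : H) : R := ip x y.

Lemma ip_symmetrize x y : ip x y = (ip_atom x y + ip_atom y x) / 2.
Proof. by rewrite /ip_atom (inner_sym ip y x); field. Qed.

(* Given the resolvent relations for p and q and the
   relation us = -b at the zero xs, the monotonicity slacks account exactly
   for the difference of the two sides of the energy inequality; it is the
   sum of the cosine-rule expansions
     2<p - xs, q - p> = |q - xs|^2 - |p - xs|^2 - |p - q|^2,
     2<p - q, q - s>  = |p - q|^2 - |p - y|^2 + |q - y|^2   (y = 2q - s). *)
Lemma energy_identity (g g' : R) (p q s y xs r1 r0 b c u1 u0 us : H) :
  g != 0 -> g' != 0 -> y = 2 *: q - s ->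
  q - g *: r1 = p + g *: u1 -> s - g' *: r0 = q + g' *: u0 -> us + b = 0 ->
  `|p - xs| ^+ 2
    + 2 * g * (ip (p - xs) (u1 - us) + ip (p - q) (u1 - u0) + ip (y - xs) (c - b))
    + ((3 - g / g') * `|p - q| ^+ 2 + g / g' * `|p - y| ^+ 2
       + 2 * g * ip (r1 - b) (p - q))
  = `|q - xs| ^+ 2 + 2 * g * ip (r0 - b) (q - s) + 2 * g * ip (r0 - r1) (p - y)
    + g / g' * `|q - y| ^+ 2 + 2 * g * ip (r1 - c) (xs - y).
Proof.
move=> gn0 g'n0 -> hu1 hu0 hus.
have solve_resolvent (h : R) (z v u : H) :
    h != 0 -> z = v + h *: u -> u = h^-1 *: (z - v).
  by move=> hn0 ->; rewrite addrAC subrr add0r scalerA mulVf ?scale1r.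
rewrite (solve_resolvent _ _ _ _ gn0 hu1) (solve_resolvent _ _ _ _ g'n0 hu0).
rewrite (_ : us = - b); last by rewrite -(addrK b us) hus sub0r.
rewrite !sqr_norm_ip !(inner_addl, ipDr, ipNl, ipNr, inner_scalel, ipZr).
rewrite !ip_symmetrize.
by field; rewrite gn0 g'n0.
Qed.
End InnerProduct.

Lemma scaled_sum3_le (R : realType) (k : R) (a1 a2 a3 : \bar R) (t1 t2 t3 : R) :
  0 <= k -> (a1 <= t1%:E)%E -> (a2 <= t2%:E)%E -> (a3 <= t3%:E)%E ->
  (k%:E * (a1 + a2 + a3) <= (k * (t1 + t2 + t3))%:E)%E.
Proof.
move=> k_ge0 h1 h2 h3; rewrite EFinM; apply: lee_wpmul2l; first by rewrite lee_fin.
by rewrite !EFinD; apply: leeD; [apply: leeD|].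
Qed.

Theorem mainTheorem2
  (R : realType) (H : completeNormedModType R) (ip : inner_product H)
  (Hsep : separable_space H)
  (d : measure_display) (Omega : measurableType d) (P : probability Omega R)
  (A : H -> set H) (B : H -> H) (mu : R)
  (hA : maximally_monotone ip A)
  (hB : monotone_fun ip B) (hmu : 0 <= mu) (hBL : lipschitz_with mu B)
  (phiA phiB : R -> \bar R) (hphiA : modulus phiA) (hphiB : modulus phiB)
  (hAu : unif_monotone_op ip phiA A) (hBu : unif_monotone_fun ip phiB B)
  (xstar : H) (hxstar : zer_sum A B xstar)
  (gamma : int -> R) (hgamma : forall n : int, (-1 <= n)%R -> 0 < gamma n)
  (x : int -> Omega -> H) (y r : nat -> Omega -> H)
  (hx0 : square_integrable P (x 0%Z)) (hxm1 : square_integrable P (x (-1)%Z))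
  (hy : forall (n : nat) w, y n w = 2 *: x n w - x (n%:Z - 1) w)
  (hr : forall n : nat, H_random_variable (r n) /\
          is_cond_exp ip P (natural_filtration x n) (r n) (fun w => B (y n w)))
  (hiter : forall (n : nat) w,
     resolvent A (gamma n) (x n w - gamma n *: r n w) (x n.+1 w)) :
  forall (n : nat), (1 <= n)%N -> forall w : Omega,
  let eps := ((2 * gamma n)%:E *
     (phiA (`|x n.+1 w - xstar|)%R + phiA (`|x n.+1 w - x n w|)%R + phiB (`|y n w - xstar|)%R))%E in
  let rho := gamma n / gamma (n%:Z - 1) in
  ((`|x n.+1 w - xstar| ^+ 2)%:E + eps
    + ((3 - rho) * `|x n.+1 w - x n w| ^+ 2
       + rho * `|x n.+1 w - y n w| ^+ 2
       + 2 * gamma n * ip (r n w - B xstar) (x n.+1 w - x n w))%:E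
  <= (`|x n w - xstar| ^+ 2
      + 2 * gamma n * ip (r n.-1 w - B xstar) (x n w - x n.-1 w)
      + 2 * gamma n * ip (r n.-1 w - r n w) (x n.+1 w - y n w)
      + rho * `|x n w - y n w| ^+ 2
      + 2 * gamma n * ip (r n w - B (y n w)) (xstar - y n w))%:E)%E.
Proof.
move=> [//|m] _ w; cbv zeta.
have pred_m1 : m.+1%:Z - 1 = m%:Z by rewrite -addn1 PoszD addrK.
have y_m1 := hy m.+1 w; rewrite pred_m1 in y_m1; rewrite pred_m1.
have [u1 [Au1 res1]] := hiter m.+1 w.
have [u0 [Au0 res0]] := hiter m w.
have [us [Aus zer_us]] := hxstar.
have g1_gt0 : 0 < gamma m.+1 by apply: hgamma.
have g0_gt0 : 0 < gamma m by apply: hgamma.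
have eps_le := scaled_sum3_le (mulr_ge0 (ler0n R 2) (ltW g1_gt0))
  (hAu _ _ _ _ Au1 Aus) (hAu _ _ _ _ Au1 Au0) (hBu (y m.+1 w) xstar).
apply: le_trans (leeD2r _ (leeD2l _ eps_le)) _.
rewrite -!EFinD lee_fin (energy_identity ip _ _ (lt0r_neq0 g1_gt0)
  (lt0r_neq0 g0_gt0) y_m1 res1 res0 zer_us) //=.
Qed.
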